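(* Let $k\ge 2$ and $l\geq 3$ be integers and $n=2^k$. Then $a_{(l-1)2^{k-1},\,l2^{k-2}+1}+a_{(l-1)2^{k-1},\,l2^{k-2}-2^{k-1}+1}\equiv 0\pmod{2^l}$.
   Context: Let $D:\mathbb{Z}^n\to\mathbb{Z}^n$, $D(x_1,\dots,x_n)=(x_1+x_2,x_2+x_3,\dots,x_n+x_1)$. For integers $r\ge 0$ and $1\le s\le n$, define the integers $a_{r,s}$ by $D^r(0,0,\dots,0,1)=(a_{r,n},a_{r,n-1},\dots,a_{r,1})$; equivalently, $a_{r,s}$ is the coefficient of $x_s$ in the first coordinate of $D^r(x_1,\dots,x_n)$. The second index is read modulo $n$ (representatives $1,\dots,n$). *)

From mathcomp Require Import all_boot all_order all_algebra.
Set Implicit Arguments. Unset Strict Implicit. Unset Printing Implicit Defensive.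
Import GRing.Theory Num.Theory.
Local Open Scope ring_scope.

(* Vectors in Z^n are represented as functions nat -> int, where the
   coordinate x_{i+1} (1-based) is stored at index i (0-based), i < n. *)

Definition Dmap (n : nat) (x : nat -> int) : nat -> int :=
  fun i => x (i %% n)%N + x (i.+1 %% n)%N.

Definition evec (n s : nat) : nat -> int :=
  fun i => if (i %% n == (s.-1) %% n)%N then 1 else 0.

(* a_{r,s} = coefficient of x_s in the first coordinate of D^r(x_1,...,x_n),
   i.e. the first coordinate of D^r applied to the basis vector e_s
   (D is linear).  The index s is read modulo n (s >= 1). *)
Definition acoef (n r s : nat) : int := iter r (Dmap n) (evec n s) 0%N.

From mathcomp Require Import all_boot all_order all_algebra.
From mathcomp Require Import zify ring.
Import GRing.Theory.

(* Since D acts on coordinates as multiplication by 1 + X on Z[X]/(X^n - 1),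
   a_{r,s} is the coefficient of X^(s-1) in (1 + X)^r mod X^n - 1.  For
   n = 2M the two coefficients at exponents M apart add up to one coefficient
   of (1 + X)^r mod X^M - 1.  With M = 2^(k-1) and y = X^(M/2) we have
   (1 + X)^M = (1 + y)^2 mod 4, so modulo X^M - 1 = y^2 - 1 it equals 2T with
   T = 1 + y mod 2, and T^2 = (1 + y)^2 mod 4 is again even modulo y^2 - 1.  Hence
   (1 + X)^((l-1)M) = 2^(l-1) T^(l-3) T^2 is divisible by 2^l there. *)

Local Open Scope ring_scope.

Section ModpUnit.

Context {R : idomainType} {d : {poly R}}.
Hypothesis ulcd : lead_coef d \is a GRing.unit.
Implicit Types p z : {poly R}.

Lemma modpDmull p z : (p + z * d) %% d = p %% d.
Proof.
by rewrite (Pdiv.IdomainUnit.modpD ulcd) Pdiv.Idomain.modp_mull addr0.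
Qed.

Lemma modpX p k : (p ^+ k) %% d = ((p %% d) ^+ k) %% d.
Proof.
elim: k => [|k IHk]; first by rewrite !expr0.
rewrite !exprS -(Pdiv.IdomainUnit.modp_mul ulcd) IHk.
rewrite (Pdiv.IdomainUnit.modp_mul ulcd) mulrC.
by rewrite -(Pdiv.IdomainUnit.modp_mul ulcd) mulrC.
Qed.

Lemma modp_modp_dvd p e : d %| e -> lead_coef e \is a GRing.unit ->
  (p %% e) %% d = p %% d.
Proof.
case/(Pdiv.IdomainUnit.dvdpP ulcd) => c -> ulce.
by rewrite {2}(Pdiv.IdomainUnit.divp_eq ulce p) mulrA addrC modpDmull.
Qed.

End ModpUnit.

Lemma lead_coef_Xn_sub1 (R : nzRingType) n : (0 < n)%N ->
  lead_coef ('X^n - 1 : {poly R}) = 1.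
Proof. by rewrite -polyC1 => /monicXnsubC/monicP->. Qed.

Lemma size_Xn_sub1 (R : nzRingType) n : (0 < n)%N ->
  size ('X^n - 1 : {poly R}) = n.+1.
Proof. by rewrite -polyC1; apply: size_XnsubC. Qed.

Section ReductionModXnSub1.

Variables (R : idomainType) (n : nat).
Hypothesis n_gt0 : (0 < n)%N.
Implicit Types p q : {poly R}.

Let ulc {m : nat} :
  (0 < m)%N -> lead_coef ('X^m - 1 : {poly R}) \is a GRing.unit.
Proof. by move/lead_coef_Xn_sub1->; rewrite unitr1. Qed.

Lemma modp_Xn_sub1_Xn i : 'X^i %% ('X^n - 1) = 'X^(i %% n) :> {poly R}.
Proof.
symmetry; apply: (Pdiv.IdomainUnit.modpP (ulc n_gt0) (q := 'X^(i %% n) *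
  \sum_(m < i %/ n) 'X^n ^+ ((i %/ n).-1 - m) * 1 ^+ m)); last first.
  by rewrite size_polyXn size_Xn_sub1 // ltnS ltn_mod.
rewrite -mulrA [_ * ('X^n - 1)]mulrC -subrXX expr1n -exprM mulrBr mulr1 subrK.
by rewrite -exprD mulnC addnC -divn_eq.
Qed.

Lemma coef_modp_Xn_sub1_small q x : (size q <= n * 2)%N -> (x < n)%N ->
  (q %% ('X^n - 1))`_x = q`_x + q`_(x + n).
Proof.
move=> szq ltxn.
have -> : q %% ('X^n - 1) = take_poly n q + drop_poly n q.
  symmetry; apply: (Pdiv.IdomainUnit.modpP (ulc n_gt0) (q := drop_poly n q)).
    by rewrite -{1}(poly_take_drop n q); ring.
  rewrite size_Xn_sub1 // ltnS; apply: leq_trans (size_polyD _ _) _.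
  by rewrite geq_max size_take_poly size_drop_poly leq_subLR addnn -mul2n mulnC.
by rewrite coefD coef_take_poly ltxn coef_drop_poly.
Qed.

Lemma coef_modp_Xn_sub1_fold p t :
  (p %% ('X^(n * 2) - 1))`_(t %% (n * 2)) +
  (p %% ('X^(n * 2) - 1))`_((t + n) %% (n * 2)) = (p %% ('X^n - 1))`_(t %% n).
Proof.
have n2_gt0 : (0 < n * 2)%N by rewrite muln_gt0 n_gt0.
have dvd_n_n2 : ('X^n - 1 : {poly R}) %| 'X^(n * 2) - 1.
  apply/(Pdiv.IdomainUnit.dvdpP (ulc n_gt0)); exists ('X^n + 1).
  by rewrite mulrC -subr_sqr expr1n -exprM.
rewrite -[in RHS](modp_modp_dvd (ulc n_gt0) p _ dvd_n_n2 (ulc n2_gt0)).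
set q := p %% _; have szq : (size q <= n * 2)%N.
  rewrite -ltnS -(@size_Xn_sub1 R _ n2_gt0) Pdiv.Idomain.ltn_modp.
  by rewrite -size_poly_gt0 size_Xn_sub1.
rewrite -(@modn_dvdm (n * 2) t n) ?dvdn_mulr // -modnDml.
have := ltn_mod t (n * 2); rewrite n2_gt0; move: (t %% _)%N => x lt_x.
have [lt_x_n | le_n_x] := ltnP x n.
  rewrite coef_modp_Xn_sub1_small // !modn_small //; lia.
have -> : x = (x - n + n)%N by rewrite subnK.
rewrite -addnA addnn -mul2n mulnC !modnDr !modn_small; try lia.
by rewrite coef_modp_Xn_sub1_small 1?addrC //; lia.
Qed.

End ReductionModXnSub1.

Lemma iter_Dmap_evec n s r i : (0 < n)%N ->
  iter r (Dmap n) (evec n s) i =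
  (('X^i * (1 + 'X) ^+ r) %% ('X^n - 1))`_(s.-1 %% n).
Proof.
move=> n_gt0; have ulc : lead_coef ('X^n - 1 : {poly int}) \is a GRing.unit.
  by rewrite lead_coef_Xn_sub1 ?unitr1.
have modp_Xmod j (p : {poly int}) :
    ('X^(j %% n) * p) %% ('X^n - 1) = ('X^j * p) %% ('X^n - 1).
  rewrite -modp_Xn_sub1_Xn // [_ * p]mulrC (Pdiv.IdomainUnit.modp_mul ulc).
  by rewrite mulrC.
elim: r i => [|r IHr] i.
  by rewrite expr0 mulr1 modp_Xn_sub1_Xn // coefXn /evec eq_sym /=; case: ifP.
rewrite iterS /Dmap !IHr !modp_Xmod -coefD -(Pdiv.IdomainUnit.modpD ulc).
by rewrite exprSr exprS; congr ((_ %% _)`__); ring.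
Qed.

Lemma acoefE n r s : (0 < n)%N ->
  acoef n r s = ((1 + 'X) ^+ r %% ('X^n - 1))`_(s.-1 %% n).
Proof. by move=> n_gt0; rewrite /acoef iter_Dmap_evec // mul1r. Qed.

Lemma exp1D_pow2_mod4 {R : comPzRingType} (x : R) j :
  exists r : R, (1 + x) ^+ (2 ^ j.+1) = (1 + x ^+ (2 ^ j)) ^+ 2 + 4 * r.
Proof.
elim: j => [|j [r IHj]]; first by exists 0; rewrite mulr0 addr0.
set y := x ^+ (2 ^ j) in IHj.
exists (y + y ^+ 2 + y ^+ 3 + 2 * r * (1 + y) ^+ 2 + 4 * r ^+ 2).
by rewrite expnSr exprM IHj expnSr exprM -/y; ring.
Qed.

Lemma modp_exp1DX_pow2_scale j l : (3 <= l)%N -> exists B : {poly int},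
  (1 + 'X) ^+ (2 ^ j.+1 * (l - 1)) %% ('X^(2 ^ j.+1) - 1) = (2 ^+ l : int) *: B.
Proof.
move=> l_ge3; have [m ->] : exists m, l = m.+3 by exists (l - 3)%N; lia.
set d := 'X^(2 ^ j.+1) - 1 : {poly int}.
have ulc : lead_coef d \is a GRing.unit.
  by rewrite lead_coef_Xn_sub1 ?expn_gt0 ?unitr1.
have [r Hr] := exp1D_pow2_mod4 ('X : {poly int}) j.
set y := 'X^(2 ^ j) : {poly int} in Hr.
have ed : d = y ^+ 2 - 1 by rewrite /d expnSr exprM.
pose T := 1 + y + 2 * r.
pose S := 1 + y + 2 * r * (1 + y) + 2 * r ^+ 2.
have eT : (1 + 'X) ^+ (2 ^ j.+1) = 2 * T + 1 * d by rewrite Hr ed /T; ring.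
have eT2 : T ^+ 2 = 2 * S + 1 * d by rewrite ed /T /S; ring.
have e2T : (2 * T) ^+ m.+2 = 2 ^+ m.+2 * T ^+ m * T ^+ 2.
  by rewrite exprMn -mulrA -exprD addn2.
exists (T ^+ m * S %% d).
rewrite exprM (modpX ulc) eT modpDmull // -(modpX ulc) e2T.
rewrite -(Pdiv.IdomainUnit.modp_mul ulc) eT2 modpDmull //.
rewrite (Pdiv.IdomainUnit.modp_mul ulc).
rewrite -(Pdiv.IdomainUnit.modpZl ulc); congr (_ %% _).
by rewrite -mul_polyC rmorphXn /= rmorph_nat !exprS; ring.
Qed.

Theorem lemma4p7 (k l : nat) (hk : (2 <= k)%N) (hl : (3 <= l)%N) :
  let n := (2 ^ k)%N in
  ((Posz (2 ^ l)%N) %|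
     (acoef n ((l - 1) * 2 ^ (k - 1))%N (l * 2 ^ (k - 2) + 1)%N
      + acoef n ((l - 1) * 2 ^ (k - 1))%N (l * 2 ^ (k - 2) - 2 ^ (k - 1) + 1)%N)%R)%Z.
Proof.
have [j -> /=] : exists j, k = j.+2 by exists (k - 2)%N; lia.
rewrite !acoefE ?expn_gt0 // !subSS !subn0 !addn1 /=.
set t := (l * 2 ^ j - 2 ^ j.+1)%N.
have -> : (l * 2 ^ j = t + 2 ^ j.+1)%N.
  by rewrite subnK // expnS leq_mul2r; apply/orP; right; lia.
rewrite addrC (expnSr 2 j.+1) coef_modp_Xn_sub1_fold ?expn_gt0 // mulnC.
have [B ->] := modp_exp1DX_pow2_scale j _ hl.
by rewrite coefZ dvdz_mulr // -natz natrX.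
Qed.
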